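(* Let $p$ be a prime, $n\geq 2$, $T=Tr(\mathbb{Z}_{p^n})$ and $G=\Gamma(T)$. Let $X$ be the set of nonzero zero-divisors of $\mathbb{Z}_{p^n}$ (i.e. the nonzero multiples of $p$), and let $$A_4^*=\left\{\begin{pmatrix}m+z&0\\0&z\end{pmatrix}\middle| m\in X,z\in\mathbb{Z}_{p^n}\right\},\ A_5^*=\left\{\begin{pmatrix}z&m\\0&z\end{pmatrix}\middle| m\in X,z\in\mathbb{Z}_{p^n}\right\},\ A_6^*=\left\{\begin{pmatrix}m_1+z&m_2\\0&z\end{pmatrix}\middle| m_1,m_2\in X,z\in\mathbb{Z}_{p^n}\right\},$$ and for a set $A^*$ of vertices write $d(A^* )=\sum_{B\in A^*}d(B)$. Then (i) $d(A_4^* )=d(A_5^* )=(p-1)\,p^{2n-1}\sum_{r=1}^{n-1}\left(p^{2n}-p^{n-r}-p^{-r}\right)$; (ii) $d(A_6^* )=2\alpha-\beta$, where $$\alpha=(p-1)\,p^{2n-1}\sum_{r=1}^{n-1}\Big((p^{3n}+p^n+1)p^{-r}-(p^{2n}+p^n)p^{-2r}-p^{2n}\Big),$$ $$\beta=(p-1)^2\sum_{r=1}^{n-1}p^{3n-2r-2}\left(p^{2n+r}-p^n-1\right).$$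
   Context: For a ring $S$ with identity whose center $Z(S)$ is not all of $S$, the commuting graph $\Gamma(S)$ is the simple graph with vertex set $S\setminus Z(S)$, in which two distinct vertices $a,b$ are adjacent iff $ab=ba$; $d(B)$ is the degree of vertex $B$. $Tr(R)$ denotes the ring of all $2\times 2$ upper triangular matrices over $R$. *)

From mathcomp Require Import all_boot all_order all_algebra.
Set Implicit Arguments. Unset Strict Implicit. Unset Printing Implicit Defensive.
Import GRing.Theory.
Local Open Scope ring_scope.

Section Defs.
Variable R : finComNzRingType.

Definition tri (a b c : R) : 'M[R]_2 :=
  \matrix_(i < 2, j < 2)
    (if (i : nat) == 0%N then (if (j : nat) == 0%N then a else b)
     else (if (j : nat) == 0%N then 0 else c)).

Definition Tr : {set 'M[R]_2} := [set A : 'M[R]_2 | A ord_max ord0 == 0].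

Definition centerTr : {set 'M[R]_2} :=
  [set A in Tr | [forall B in Tr, A *m B == B *m A]].

Definition vertices : {set 'M[R]_2} := Tr :\: centerTr.

Definition deg (B : 'M[R]_2) : nat :=
  #|[set A in vertices | (A != B) && (A *m B == B *m A)]|.

Definition degset (S : {set 'M[R]_2}) : nat := \sum_(B in S) deg B.

Definition nzzd : {set R} := [set x : R | (x != 0) && [exists y : R, (y != 0) && (x * y == 0)]].

Definition A4 : {set 'M[R]_2} :=
  [set A : 'M[R]_2 | [exists m in nzzd, exists z : R, A == tri (m + z) 0 z]].
Definition A5 : {set 'M[R]_2} :=
  [set A : 'M[R]_2 | [exists m in nzzd, exists z : R, A == tri z m z]].
Definition A6 : {set 'M[R]_2} :=
  [set A : 'M[R]_2 |
    [exists m1 in nzzd, exists m2 in nzzd, exists z : R, A == tri (m1 + z) m2 z]].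

End Defs.

(* Write a vertex as [[a + z, b], [0, z]]: the scalar part [z] is central, so
   two such matrices commute iff their pairs [(a, b)] and [(a', b')] are
   proportional, [a b' = a' b].  The degree of a vertex therefore only depends
   on the number of pairs proportional to [(a, b)]; in Z/p^n this number is
   p^n p^min(v(a), v(b)) with [v] the p-adic valuation, since the pair with
   the smaller valuation divides the other.  Summing over the valuation levels
   of the nonzero zero-divisors, of sizes p^(n-r) - p^(n-r-1), gives the
   closed forms. *)

From mathcomp Require Import all_boot all_order all_algebra.
From mathcomp Require Import zify ring.
Set Implicit Arguments. Unset Strict Implicit. Unset Printing Implicit Defensive.
Import GRing.Theory.
Local Open Scope ring_scope.

Section CommutingGraphTr.
Variable R : finComNzRingType.

Lemma triE (a b c : R) (i j : 'I_2) :
  tri a b c i j = if (i : nat) == 0%N then (if (j : nat) == 0%N then a else b)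
                  else (if (j : nat) == 0%N then 0 else c).
Proof. by rewrite mxE. Qed.

Lemma tri_eq (a b c a' b' c' : R) :
  (tri a b c == tri a' b' c') = [&& a == a', b == b' & c == c'].
Proof.
apply/eqP/and3P => [E|[/eqP-> /eqP-> /eqP->]] //.
pose entries (M : 'M[R]_2) := (M ord0 ord0, M ord0 ord_max, M ord_max ord_max).
have := congr1 entries E.
by rewrite /entries !triE /= => [[-> -> ->]].
Qed.

Lemma mul_tri (a b c x y z : R) :
  tri a b c *m tri x y z = tri (a * x) (a * y + b * z) (c * z).
Proof.
apply/matrixP=> i j; rewrite !mxE !big_ord_recl big_ord0 !triE /=.
case: i => [[|[|//]] ?]; case: j => [[|[|//]] ?] /=;
  by rewrite ?mulr0 ?mul0r ?addr0 ?add0r.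
Qed.

Lemma Tr_tri (A : 'M[R]_2) :
  A \in Tr R -> A = tri (A ord0 ord0) (A ord0 ord_max) (A ord_max ord_max).
Proof.
rewrite inE => /eqP A10; apply/matrixP=> i j; rewrite triE.
case: i => [[|[|//]] ?]; case: j => [[|[|//]] ?] /=;
  by rewrite -?A10; congr (A _ _); apply: val_inj.
Qed.

Definition tris (t : R * R * R) : 'M[R]_2 := tri (t.1.1 + t.2) t.1.2 t.2.

Lemma tris_inj : injective tris.
Proof.
move=> [[a b] z] [[a' b'] z'] /eqP; rewrite tri_eq /=.
by case/and3P=> /eqP + /eqP-> /eqP zz'; rewrite zz' => /addIr->.
Qed.

Lemma tris_Tr t : tris t \in Tr R.
Proof. by rewrite inE triE. Qed.

Lemma Tr_tris (A : 'M[R]_2) : A \in Tr R ->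
  A = tris ((A ord0 ord0 - A ord_max ord_max, A ord0 ord_max), A ord_max ord_max).
Proof. by move/Tr_tri => {1}->; rewrite /tris /= subrK. Qed.

Lemma tris_comm t s :
  (tris t *m tris s == tris s *m tris t) = (t.1.1 * s.1.2 == s.1.1 * t.1.2).
Proof.
rewrite !mul_tri tri_eq [(s.1.1 + s.2) * _]mulrC eqxx [s.2 * _]mulrC eqxx andbT.
rewrite -subr_eq0 -[RHS]subr_eq0; congr (_ == 0); ring.
Qed.

Lemma tris_center t : (tris t \in centerTr R) = (t.1 == 0).
Proof.
rewrite inE tris_Tr /=; apply/forall_inP/idP => [tC|/eqP t0 B /Tr_tris->].
  move: (tC _ (tris_Tr ((1, 0), 0))) (tC _ (tris_Tr ((0, 1), 0))).
  rewrite !tris_comm /= mulr0 mul1r mulr1 mul0r.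
  by case: t {tC} => [[a b] z] /= /eqP<- /eqP->.
by rewrite tris_comm t0 /= mul0r mulr0.
Qed.

Lemma vertices_tris : vertices R = tris @: [set t : R * R * R | t.1 != 0].
Proof.
apply/setP=> A; rewrite inE; apply/andP/imsetP => [[nC /Tr_tris AE]|[t]].
  by eexists; last exact: AE; rewrite inE -tris_center -AE.
by rewrite inE => t0 ->; rewrite tris_center t0 tris_Tr.
Qed.

Definition prop_pairs (a b : R) : {set R * R} := [set x | x.1 * b == a * x.2].

Lemma prop_pairsC a b : #|prop_pairs a b| = #|prop_pairs b a|.
Proof.
rewrite -(card_imset _ (can_inj (@swap_pairK R R))); apply: eq_card => x.
rewrite (can2_imset_pre _ (@swap_pairK R R) (@swap_pairK R R)) !inE /=.
by rewrite eq_sym mulrC [b * _]mulrC.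
Qed.

Definition ann (a : R) : {set R} := [set y | a * y == 0].

(* [(x, y) |-> (x, x t - y)] maps [prop_pairs a (a t)] onto [R * ann a]. *)
Lemma card_prop_pairs_mulr a t : #|prop_pairs a (a * t)| = (#|R| * #|ann a|)%N.
Proof.
pose g (y : R * R) := (y.1, y.1 * t - y.2).
have gK : involutive g by move=> [x y]; rewrite /g /= opprB addrC subrK.
rewrite -[#|R|]cardsT -cardsX -(card_imset _ (can_inj gK)).
apply: eq_card => x; rewrite (can2_imset_pre _ gK gK) !inE /=.
by rewrite -subr_eq0; congr (_ == 0); ring.
Qed.

Lemma deg_tris t : t.1 != 0 ->
  (deg (tris t) + 1 + #|R| = #|prop_pairs t.1.1 t.1.2| * #|R|)%N.
Proof.
move=> t0; rewrite /deg; set P := prop_pairs _ _.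
set X := setX (P :\ (0 : R * R)) [set: R].
have -> : [set A in vertices R | (A != tris t) && (A *m tris t == tris t *m A)] =
          tris @: (X :\ t).
  apply/setP=> A; rewrite inE vertices_tris.
  apply/andP/imsetP => [[/imsetP[s]]|[s]].
    rewrite inE => s0 -> /andP[]; rewrite tris_comm => sNt st.
    by exists s => //; rewrite !inE s0 st !andbT; apply: contra_neq sNt => ->.
  rewrite !inE andbT => /and3P[sNt s0 st] ->; split.
    by apply/imsetP; exists s; rewrite ?inE.
  by rewrite (inj_eq tris_inj) sNt tris_comm.
have cardP : #|P| = (#|P :\ (0 : R * R)|).+1.
  by rewrite (cardsD1 (0 : R * R)) inE mul0r mulr0 eqxx.
have cardX : #|X| = (#|X :\ t|).+1 by rewrite (cardsD1 t) !inE t0 eqxx.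
rewrite card_imset; last exact: tris_inj.
by rewrite addn1 -cardX cardsX cardsT cardP mulSn addnC.
Qed.

(* The total degree of the vertices [tris (x, z)], [z \in R]. *)
Definition fibre_deg (x : R * R) : rat :=
  ((#|prop_pairs x.1 x.2|%:R - 1) * #|R|%:R - 1) *+ #|R|.

Lemma degset_tris (P : {set R * R}) : 0 \notin P ->
  (degset (tris @: setX P setT))%:R = \sum_(x in P) fibre_deg x.
Proof.
move=> P0; rewrite /degset big_imset /=; last by move=> ? ? _ _ /tris_inj.
rewrite natr_sum (eq_bigl (fun t => (t.1 \in P) && (t.2 \in setT))); last first.
  by move=> [x z]; rewrite inE.
rewrite -(pair_big_dep (mem P) (fun _ z => z \in setT)
                       (fun x z => (deg (tris (x, z)))%:R)) /=.
apply: eq_bigr => x xP; rewrite /fibre_deg -cardsT -sumr_const.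
apply: eq_bigr => z _; rewrite cardsT.
have /deg_tris : (x, z).1 != 0 by apply: contraNneq P0 => <-.
move/(congr1 (fun k => k%:R : rat)); rewrite !natrD !natrM /= => E.
by apply/(addIr (1 + #|R|%:R)); rewrite addrA E; ring.
Qed.

Lemma nzzd_neq0 a : a \in nzzd R -> a != 0.
Proof. by rewrite inE => /andP[]. Qed.

Lemma degset_A4 : (degset (A4 R))%:R = \sum_(m in nzzd R) fibre_deg (m, 0).
Proof.
have -> : A4 R = tris @: setX [set (m, 0) | m in nzzd R] setT.
  apply/setP=> A; rewrite inE; apply/exists_inP/imsetP.
    case=> m mX /existsP[z /eqP->]; exists ((m, 0), z) => //.
    by rewrite in_setX in_setT andbT imset_f.
  case=> [[x z]]; rewrite in_setX in_setT andbT => /imsetP[m mX ->] ->.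
  by exists m => //; apply/existsP; exists z.
rewrite degset_tris; last first.
  by apply/imsetP=> -[m /nzzd_neq0 m0 [/eqP]]; rewrite eq_sym (negPf m0).
by rewrite big_imset //= => m m' _ _ [].
Qed.

Lemma degset_A5 : (degset (A5 R))%:R = \sum_(m in nzzd R) fibre_deg (0, m).
Proof.
have -> : A5 R = tris @: setX [set (0, m) | m in nzzd R] setT.
  apply/setP=> A; rewrite inE; apply/exists_inP/imsetP.
    case=> m mX /existsP[z /eqP->]; exists ((0, m), z).
      by rewrite in_setX in_setT andbT imset_f.
    by rewrite /tris /= add0r.
  case=> [[x z]]; rewrite in_setX in_setT andbT => /imsetP[m mX ->] ->.
  by exists m => //; apply/existsP; exists z; rewrite /tris /= add0r.
rewrite degset_tris; last first.
  by apply/imsetP=> -[m /nzzd_neq0 m0 [/eqP]]; rewrite eq_sym (negPf m0).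
by rewrite big_imset //= => m m' _ _ [].
Qed.

Lemma degset_A6 :
  (degset (A6 R))%:R =
  \sum_(m1 in nzzd R) \sum_(m2 in nzzd R) fibre_deg (m1, m2).
Proof.
have -> : A6 R = tris @: setX (setX (nzzd R) (nzzd R)) setT.
  apply/setP=> A; rewrite inE; apply/exists_inP/imsetP.
    case=> m1 m1X /exists_inP[m2 m2X /existsP[z /eqP->]].
    by exists ((m1, m2), z); rewrite // !in_setX m1X m2X in_setT.
  case=> [[[m1 m2] z]]; rewrite !in_setX in_setT andbT => /andP[m1X m2X] ->.
  by exists m1 => //; apply/exists_inP; exists m2 => //; apply/existsP; exists z.
rewrite degset_tris; last by apply/negP => /setXP[/nzzd_neq0/eqP].
by rewrite pair_big_dep; apply: eq_bigl => -[m1 m2]; rewrite inE.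
Qed.

End CommutingGraphTr.

Lemma sum1_dvdn_ltmul d e : (0 < d)%N -> (\sum_(0 <= k < d * e | d %| k) 1)%N = e.
Proof.
move=> d0; case: e => [|e]; first by rewrite muln0 big_geq.
have de : (0 < d * e.+1)%N by rewrite muln_gt0 d0.
rewrite big_mkcond /= big_ltn // dvdn0 /=.
have := divn_count_dvd d (d * e.+1).-1; rewrite prednK // => <-.
have -> : (d * e.+1).-1 = (e * d + d.-1)%N by rewrite mulnS mulnC; lia.
by rewrite divnMDl // divn_small ?addn0 // prednK.
Qed.

(* [fibre_deg x] in ['Z_(p ^ n)] when [#|prop_pairs x.1 x.2| = p ^ (n + r)],
   for [q = p]. *)
Definition vdeg (F : nzRingType) (q : F) (n r : nat) : F :=
  ((q ^+ n * q ^+ r - 1) * q ^+ n - 1) * q ^+ n.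

Section ZpnZeroDivisors.
Variables (p n : nat).
Hypotheses (p_pr : prime p) (n_gt0 : (0 < n)%N).
Local Notation N := (p ^ n)%N.

Lemma Zpn_gt1 : (1 < N)%N.
Proof. by rewrite -(exp1n n) ltn_exp2r ?prime_gt1. Qed.

Lemma card_Zpn : #|'Z_N| = N.
Proof. by rewrite card_ord Zp_cast // Zpn_gt1. Qed.

Lemma Zpn_val_lt (x : 'Z_N) : (val x < N)%N.
Proof.
by move: (ltn_ord x); rewrite [in X in (_ < X)%N -> _]Zp_cast // Zpn_gt1.
Qed.

Lemma Zpn_natr_eq0 k : ((k%:R : 'Z_N) == 0) = (N %| k)%N.
Proof. by rewrite -val_eqE /= val_Zp_nat ?Zpn_gt1. Qed.

Lemma Zpn_mul_eq0 (x y : 'Z_N) : (x * y == 0) = (N %| val x * val y)%N.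
Proof. by rewrite -Zpn_natr_eq0 natrM !natr_Zp. Qed.

Lemma big_Zpn_val (P : pred nat) (G : nat -> nat) :
  (\sum_(x : 'Z_N | P (val x)) G (val x) = \sum_(0 <= k < N | P k) G k)%N.
Proof. by rewrite big_mkord Zp_cast // Zpn_gt1. Qed.

Lemma nzzd_Zpn (x : 'Z_N) : (x \in nzzd 'Z_N) = (0 < val x)%N && (p %| val x)%N.
Proof.
rewrite inE -val_eqE lt0n /=; have [//|x0 /=] := eqVneq (val x) 0%N.
apply/existsP/idP => [[y /andP[y0]]|px].
  rewrite Zpn_mul_eq0; apply: contraLR => pNx.
  have Nx : coprime N (val x) by rewrite coprime_pexpl ?prime_coprime.
  rewrite (Gauss_dvdr _ Nx); apply: contra y0 => /dvdnP[k yk].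
  rewrite -val_eqE /= yk; case: k yk => // k yk.
  by have := Zpn_val_lt y; rewrite yk mulSn ltnNge leq_addr.
(* [p ^ n.-1] is a nonzero annihilator of every multiple of [p]. *)
exists (p ^ n.-1)%N%:R; rewrite Zpn_natr_eq0 -[x]natr_Zp -natrM Zpn_natr_eq0.
apply/andP; split; first by rewrite dvdn_Pexp2l ?prime_gt1 // -ltnNge ltn_predL.
by rewrite -{1}(prednK n_gt0) expnS dvdn_pmul2r ?expn_gt0 ?prime_gt0.
Qed.

Lemma nzzd_val_gt0 (x : 'Z_N) : x \in nzzd 'Z_N -> (0 < val x)%N.
Proof. by rewrite nzzd_Zpn => /andP[]. Qed.

Definition vp (x : 'Z_N) : nat := logn p (val x).

Lemma vp_lt (x : 'Z_N) : (0 < val x)%N -> (vp x < n)%N.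
Proof.
move=> x0; rewrite ltnNge -pfactor_dvdn //; apply/negP => /(dvdn_leq x0).
by rewrite leqNgt Zpn_val_lt.
Qed.

Lemma vp_gt0 (x : 'Z_N) : x \in nzzd 'Z_N -> (0 < vp x)%N.
Proof. by rewrite nzzd_Zpn /vp logn_gt0 mem_primes p_pr => /andP[-> ->]. Qed.

Lemma card_ann_Zpn (x : 'Z_N) : (0 < val x)%N -> #|ann x| = (p ^ vp x)%N.
Proof.
move=> x0; have [w pNw xE] := pfactor_coprime p_pr x0; rewrite -/(vp x) in xE.
have := vp_lt x0; move: (vp x) xE => r xE r_lt.
rewrite -sum1_card (eq_bigl (fun y : 'Z_N => N %| val x * val y)%N); last first.
  by move=> y; rewrite inE Zpn_mul_eq0.
rewrite (big_Zpn_val (fun k => N %| val x * k)%N (fun _ => 1%N)) xE.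
have NE : N = (p ^ (n - r) * p ^ r)%N by rewrite -expnD subnK // ltnW.
rewrite NE (eq_bigl (fun k => p ^ (n - r) %| k)%N).
  by rewrite sum1_dvdn_ltmul // expn_gt0 prime_gt0.
move=> k; rewrite mulnAC dvdn_pmul2r ?expn_gt0 ?prime_gt0 // Gauss_dvdr //.
by rewrite coprime_pexpl // subn_gt0.
Qed.

Lemma Zpn_dvd_vp_le (x y : 'Z_N) : (0 < val x)%N -> (0 < val y)%N ->
  (vp x <= vp y)%N -> exists t, y = x * t.
Proof.
move=> x0 y0.
have [w pNw xE] := pfactor_coprime p_pr x0.
have [w' _ yE] := pfactor_coprime p_pr y0.
rewrite -/(vp x) in xE; rewrite -/(vp y) in yE.
move: (vp x) (vp y) xE yE => r s xE yE le_rs.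
have wU : (w%:R : 'Z_N) \is a GRing.unit.
  by rewrite unitZpE ?Zpn_gt1 ?coprime_pexpl.
exists ((w' * p ^ (s - r))%:R / w%:R).
rewrite -[x]natr_Zp -[y]natr_Zp yE xE mulrA -natrM.
have -> : (w * p ^ r * (w' * p ^ (s - r)) = w' * p ^ s * w)%N.
  by rewrite -[in RHS](subnKC le_rs) expnD; ring.
by rewrite [(w' * _ * w)%:R]natrM mulrK.
Qed.

Lemma card_prop_pairs_Zpn (x y : 'Z_N) : x \in nzzd 'Z_N -> y \in nzzd 'Z_N ->
  #|prop_pairs x y| = (N * p ^ minn (vp x) (vp y))%N.
Proof.
move=> /nzzd_val_gt0 x0 /nzzd_val_gt0 y0.
have [le_xy|/ltnW le_yx] := leqP (vp x) (vp y).
  have [t ->] := Zpn_dvd_vp_le x0 y0 le_xy.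
  by rewrite card_prop_pairs_mulr card_Zpn card_ann_Zpn.
have [t ->] := Zpn_dvd_vp_le y0 x0 le_yx.
by rewrite prop_pairsC card_prop_pairs_mulr card_Zpn card_ann_Zpn.
Qed.

Lemma card_prop_pairs_Zpn0 (x : 'Z_N) : x \in nzzd 'Z_N ->
  #|prop_pairs x 0| = (N * p ^ vp x)%N.
Proof.
move=> /nzzd_val_gt0 x0.
by rewrite -(mulr0 x) card_prop_pairs_mulr card_Zpn card_ann_Zpn.
Qed.

Lemma card_nzzd_vp_ge s : (0 < s <= n)%N ->
  (\sum_(x | (x \in nzzd 'Z_N) && (s <= vp x)) 1)%N = (p ^ (n - s) - 1)%N.
Proof.
case/andP=> s_gt0 s_le.
rewrite (eq_bigl (fun x : 'Z_N => (0 < val x) && (p ^ s %| val x))%N); last first.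
  move=> x; rewrite nzzd_Zpn; case: ltnP => //= x0.
  rewrite /vp -pfactor_dvdn //; apply/andP/idP => [[] //|psx]; split=> //.
  exact: dvdn_trans (dvdn_exp s_gt0 (dvdnn p)) psx.
rewrite (big_Zpn_val (fun k => (0 < k) && (p ^ s %| k))%N (fun _ => 1%N)).
have ps_gt0 : (0 < p ^ s)%N by rewrite expn_gt0 prime_gt0.
have := sum1_dvdn_ltmul (p ^ (n - s)) ps_gt0; rewrite -expnD subnKC // => <-.
have N_gt0 : (0 < N)%N by rewrite expn_gt0 prime_gt0.
rewrite [LHS]big_ltn_cond // [in RHS]big_ltn_cond // dvdn0 addKn.
by rewrite [LHS]big_nat_cond [RHS]big_nat_cond; apply: eq_bigl => -[].
Qed.

Local Notation q := (p%:R : rat).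

Lemma sum_nzzd_vp_ge s : (0 < s <= n)%N ->
  \sum_(x | (x \in nzzd 'Z_N) && (s <= vp x)%N) 1 = q ^+ (n - s) - 1 :> rat.
Proof.
move/card_nzzd_vp_ge/(congr1 (fun k => k%:R : rat)).
by rewrite natr_sum natrB ?natrX ?expn_gt0 ?prime_gt0.
Qed.

Lemma sum_nzzd_vp (G : nat -> rat) :
  \sum_(x in nzzd 'Z_N) G (vp x) =
  \sum_(1 <= r < n) (q ^+ (n - r) - q ^+ (n - r.+1)) * G r.
Proof.
transitivity (\sum_(x in nzzd 'Z_N) \sum_(1 <= r < n) (vp x == r)%:R * G r).
  apply: eq_bigr => x xX; have x0 := nzzd_val_gt0 xX.
  rewrite (bigD1_seq (vp x)) ?mem_index_iota ?iota_uniq ?vp_gt0 ?vp_lt //=.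
  rewrite eqxx mul1r.
  by rewrite big1 ?addr0 // => r; rewrite eq_sym => /negPf->; rewrite mul0r.
rewrite exchange_big /=; apply: eq_big_nat => r /andP[r_gt0 r_lt].
rewrite -mulr_suml; congr (_ * _).
have -> : q ^+ (n - r) - q ^+ (n - r.+1) =
          q ^+ (n - r) - 1 - (q ^+ (n - r.+1) - 1).
  by rewrite opprB addrA subrK.
have r_range : (0 < r <= n)%N by rewrite r_gt0 ltnW.
have rS_range : (0 < r.+1 <= n)%N by [].
rewrite -(sum_nzzd_vp_ge r_range) -(sum_nzzd_vp_ge rS_range).
rewrite !big_mkcondr -sumrB; apply: eq_bigr => x _.
by case: ltngtP; rewrite ?subr0 ?subrr.
Qed.

Lemma sum_nzzd_minvp (G : nat -> rat) :
  \sum_(x in nzzd 'Z_N) \sum_(y in nzzd 'Z_N) G (minn (vp x) (vp y)) =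
  \sum_(x in nzzd 'Z_N)
     G (vp x) * (q ^+ (n - vp x) - 1 + (q ^+ (n - (vp x).+1) - 1)).
Proof.
transitivity (\sum_(x in nzzd 'Z_N)
    (\sum_(y | (y \in nzzd 'Z_N) && (vp x <= vp y)%N) G (vp x) +
     \sum_(y | (y \in nzzd 'Z_N) && (vp y < vp x)%N) G (vp y))).
  apply: eq_bigr => x _; rewrite (bigID (fun y => vp x <= vp y)%N) /=.
  congr (_ + _).
    by apply: eq_bigr => y /andP[_ /minn_idPl->].
  by apply: eq_big => [y|y /andP[_]]; rewrite -?ltnNge // => /ltnW/minn_idPr->.
(* The pairs with [vp y < vp x] are counted with [x] and [y] swapped. *)
rewrite big_split /= [X in _ + X](exchange_big_dep (mem (nzzd 'Z_N))) /=;
  last by move=> x y _ /andP[].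
rewrite -big_split /=; apply: eq_bigr => x xX; rewrite mulrDr.
have x0 := nzzd_val_gt0 xX.
have vp_range : (0 < vp x <= n)%N by rewrite vp_gt0 // ltnW // vp_lt.
have vpS_range : (0 < (vp x).+1 <= n)%N by rewrite vp_lt.
rewrite -sum_nzzd_vp_ge // -sum_nzzd_vp_ge // !mulr_sumr; congr (_ + _).
  by apply: eq_bigr => y _; rewrite mulr1.
by apply: eq_big => [y|y _]; rewrite ?mulr1 // xX.
Qed.

Lemma fibre_deg_Zpn (x : 'Z_N * 'Z_N) r :
  #|prop_pairs x.1 x.2| = (N * p ^ r)%N -> fibre_deg x = vdeg q n r.
Proof. by move=> cx; rewrite /fibre_deg cx card_Zpn -mulr_natr !natrM !natrX. Qed.

Lemma degset_A4_Zpn : (degset (A4 'Z_N))%:R =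
  \sum_(1 <= r < n) (q ^+ (n - r) - q ^+ (n - r.+1)) * vdeg q n r.
Proof.
rewrite degset_A4 -sum_nzzd_vp; apply: eq_bigr => m mX.
exact/fibre_deg_Zpn/card_prop_pairs_Zpn0.
Qed.

Lemma degset_A5_Zpn : (degset (A5 'Z_N))%:R =
  \sum_(1 <= r < n) (q ^+ (n - r) - q ^+ (n - r.+1)) * vdeg q n r.
Proof.
rewrite degset_A5 -sum_nzzd_vp; apply: eq_bigr => m mX.
by apply: fibre_deg_Zpn; rewrite prop_pairsC card_prop_pairs_Zpn0.
Qed.

Lemma degset_A6_Zpn : (degset (A6 'Z_N))%:R =
  \sum_(1 <= r < n) (q ^+ (n - r) - q ^+ (n - r.+1)) *
     (vdeg q n r * (q ^+ (n - r) - 1 + (q ^+ (n - r.+1) - 1))).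
Proof.
rewrite degset_A6 -(sum_nzzd_vp (fun r => _ * (_ + _))) -sum_nzzd_minvp.
apply: eq_bigr => m1 m1X; apply: eq_bigr => m2 m2X.
exact/fibre_deg_Zpn/card_prop_pairs_Zpn.
Qed.

End ZpnZeroDivisors.

(* Writing [n = r + k.+1] turns every exponent into a sum, after which [field]
   treats [q ^+ r] and [q ^+ k] as atoms. *)
Section SummandIdentities.
Variables (F : fieldType) (q : F) (n r : nat).
Hypotheses (q_neq0 : q != 0) (r_lt : (r < n)%N).

Lemma vdeg_A45_summand :
  (q ^+ (n - r) - q ^+ (n - r.+1)) * vdeg q n r =
  (q - 1) * q ^+ (2 * n - 1) * (q ^+ (2 * n) - q ^+ (n - r) - q ^- r).
Proof.
have [k ->] : exists k, n = (r + k.+1)%N by exists (n - r.+1)%N; lia.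
have -> : (r + k.+1 - r = k.+1)%N by lia.
have -> : (r + k.+1 - r.+1 = k)%N by lia.
have -> : (2 * (r + k.+1) - 1 = (r + r) + (k + k).+1)%N by lia.
have -> : (2 * (r + k.+1) = (r + r) + (k + k).+2)%N by lia.
rewrite /vdeg !(exprD, exprS).
have qr0 : q ^+ r != 0 by rewrite expf_neq0.
by move: (q ^+ r) (q ^+ k) qr0 => a b a0; field.
Qed.

Lemma vdeg_A6_summand :
  (q ^+ (n - r) - q ^+ (n - r.+1)) *
     (vdeg q n r * (q ^+ (n - r) - 1 + (q ^+ (n - r.+1) - 1))) =
  2 * ((q - 1) * q ^+ (2 * n - 1) *
      ((q ^+ (3 * n) + q ^+ n + 1) * q ^- r
       - (q ^+ (2 * n) + q ^+ n) * q ^- (2 * r) - q ^+ (2 * n)))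
  - (q - 1) ^+ 2 * (q ^+ (3 * n - 2 * r - 2) * (q ^+ (2 * n + r) - q ^+ n - 1)).
Proof.
have [k ->] : exists k, n = (r + k.+1)%N by exists (n - r.+1)%N; lia.
have -> : (r + k.+1 - r = k.+1)%N by lia.
have -> : (r + k.+1 - r.+1 = k)%N by lia.
have -> : (2 * (r + k.+1) - 1 = (r + r) + (k + k).+1)%N by lia.
have -> : (3 * (r + k.+1) - 2 * r - 2 = r + (k + k + k).+1)%N by lia.
have -> : (3 * (r + k.+1) = (r + r + r) + (k + k + k).+3)%N by lia.
have -> : (2 * (r + k.+1) + r = (r + r + r) + (k + k).+2)%N by lia.
have -> : (2 * (r + k.+1) = (r + r) + (k + k).+2)%N by lia.
have -> : (2 * r = r + r)%N by lia.
rewrite /vdeg !(exprD, exprS).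
have qr0 : q ^+ r != 0 by rewrite expf_neq0.
by move: (q ^+ r) (q ^+ k) qr0 => a b a0; field.
Qed.

End SummandIdentities.

Unset Implicit Arguments.

Theorem corollary2p8 (p n : nat) (hp : prime p) (hn : (2 <= n)%N) :
  let R := 'Z_(p ^ n) in
  let q : rat := p%:R in
  [/\ (degset (A4 R))%:R =
        (q - 1) * q ^+ (2 * n - 1) *
        \sum_(1 <= r < n) (q ^+ (2 * n) - q ^+ (n - r) - q ^- r),
      (degset (A5 R))%:R =
        (q - 1) * q ^+ (2 * n - 1) *
        \sum_(1 <= r < n) (q ^+ (2 * n) - q ^+ (n - r) - q ^- r)
    & (degset (A6 R))%:R =
        2 * ((q - 1) * q ^+ (2 * n - 1) *
             \sum_(1 <= r < n)
               ((q ^+ (3 * n) + q ^+ n + 1) * q ^- r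
                - (q ^+ (2 * n) + q ^+ n) * q ^- (2 * r) - q ^+ (2 * n)))
        - (q - 1) ^+ 2 *
          \sum_(1 <= r < n)
            q ^+ (3 * n - 2 * r - 2) * (q ^+ (2 * n + r) - q ^+ n - 1)].
Proof.
move=> R q; have n_gt0 : (0 < n)%N := ltnW hn.
have q_neq0 : q != 0 by rewrite Num.Theory.pnatr_eq0 -lt0n prime_gt0.
rewrite degset_A4_Zpn // degset_A5_Zpn // degset_A6_Zpn //.
have degA45 : \sum_(1 <= r < n) (q ^+ (n - r) - q ^+ (n - r.+1)) * vdeg q n r =
    (q - 1) * q ^+ (2 * n - 1) *
    \sum_(1 <= r < n) (q ^+ (2 * n) - q ^+ (n - r) - q ^- r).
  rewrite mulr_sumr; apply: eq_big_nat => r /andP[_ r_lt].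
  by rewrite vdeg_A45_summand.
split=> //; rewrite !mulr_sumr -sumrB.
by apply: eq_big_nat => r /andP[_ r_lt]; rewrite vdeg_A6_summand.
Qed.
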